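(* Let $n\ge 2$ and let $\Delta=\{(p_1,\ldots,p_n)\in\mathbb{R}^n : \sum_{i=1}^n p_i=1,\ p_i\ge 0\ \forall i\}$ be the probability simplex, with $\mathbf{e}_j$ ($j=1,\ldots,n$) the standard basis vectors (the point-mass PMFs). Let $\mathbf{p},\mathbf{p}'\in\Delta$. Then there exist $\mathbf{q}=(q_1,\ldots,q_n)\in\Delta$ and an index set $J\subset\{1,\ldots,n\}$ with $|J|=n-1$, $J=\{j_1,\ldots,j_{n-1}\}$, such that $$\mathbf{p}'=q_1\mathbf{p}+\sum_{i=1}^{n-1}q_{i+1}\mathbf{e}_{j_i}.$$ Moreover, if $\mathbf{p}'$ is an interior point of $\Delta$ (all entries strictly positive), then $q_1>0$. *)

(* Points of R^n are functions 'I_n -> R (coordinates indexed 0..n-1). *)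
From mathcomp Require Import all_boot all_order all_algebra.
Set Implicit Arguments. Unset Strict Implicit. Unset Printing Implicit Defensive.
Import Order.TTheory GRing.Theory Num.Theory.
Local Open Scope ring_scope.

Definition in_simplex (R : realFieldType) (n : nat) (p : 'I_n -> R) : Prop :=
  (\sum_(i < n) p i = 1) /\ (forall i, 0 <= p i).

Definition e_basis (R : realFieldType) (n : nat) (j : 'I_n) : 'I_n -> R :=
  fun k => (k == j)%:R.

Lemma succ_ord_proof (n : nat) (i : 'I_n.-1) : (i.+1 < n)%N.
Proof. by case: n i => [[]|n] //= i; rewrite ltnS. Qed.

Definition succ_ord (n : nat) (i : 'I_n.-1) : 'I_n := Ordinal (succ_ord_proof i).

From mathcomp Require Import all_boot all_order all_algebra.
Set Implicit Arguments. Unset Strict Implicit. Unset Printing Implicit Defensive.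
Import Order.TTheory GRing.Theory Num.Theory.
Local Open Scope ring_scope.

(* Scale p by the largest t >= 0 with t p <= p' coordinatewise; t is the
   minimum of p'_k / p_k over the support of p, attained at some m.  Then
   p' - t p is a nonnegative vector with total mass 1 - t vanishing at m, so
   it is a combination of the n - 1 point masses e_k, k <> m, and the
   coefficients t, (p'_k - t p_k)_{k <> m} form the required q.  When p' is
   interior, t = p'_m / p_m > 0. *)

Section SimplexDecomposition.

Variable R : realFieldType.

Lemma simplex_support_nonempty (n : nat) (p : 'I_n -> R) :
  in_simplex p -> exists k, 0 < p k.
Proof.
move=> [sp hp]; case: (pickP (fun k => 0 < p k)) => [k pk|p_le0]; first by exists k.
have p0 : \sum_(k < n) p k = 0.
  by apply: big1 => k _; apply/eqP; rewrite eq_le hp andbT leNgt p_le0.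
by move: (oner_neq0 R); rewrite -sp p0 eqxx.
Qed.

Lemma simplex_max_scale (n : nat) (p p' : 'I_n -> R) :
  in_simplex p -> (forall k, 0 <= p' k) ->
  exists m t, [/\ 0 <= t, t * p m = p' m, forall k, t * p k <= p' k
                & (forall k, 0 < p' k) -> 0 < t].
Proof.
move=> p_simplex hp'; have [k0 pk0] := simplex_support_nonempty p_simplex.
have hp := p_simplex.2.
case: (arg_minP (fun k => p' k / p k) (P := fun k => 0 < p k) pk0) => m pm min_m.
exists m, (p' m / p m); split.
- by rewrite divr_ge0 // ltW.
- by rewrite divfK // gt_eqF.
- move=> k; have [pk|pk] := ltP 0 (p k); first by rewrite -ler_pdivlMr // min_m.
  suff -> : p k = 0 by rewrite mulr0.
  by apply/eqP; rewrite eq_le pk hp.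
- by move=> p'_pos; rewrite divr_gt0.
Qed.

Lemma sum_e_basis (n : nat) (r : 'I_n -> R) (k : 'I_n) :
  \sum_(i < n) r i * e_basis R i k = r k.
Proof.
rewrite (bigD1 k) //= big1 => [|i ik]; first by rewrite /e_basis eqxx mulr1 addr0.
by rewrite /e_basis eq_sym (negbTE ik) mulr0.
Qed.

Lemma sum_e_basis_lift (n : nat) (r : 'I_n.+1 -> R) (m k : 'I_n.+1) :
  r m = 0 -> r k = \sum_(i < n) r (lift m i) * e_basis R (lift m i) k.
Proof. by move=> rm0; rewrite -[LHS]sum_e_basis (bigD1_ord m) //= rm0 mul0r add0r. Qed.

Lemma succ_ordE (n : nat) (i : 'I_n.+1) : @succ_ord n.+2 i = lift ord0 i.
Proof. exact: val_inj. Qed.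

End SimplexDecomposition.

Theorem lemma1 (R : realFieldType) (n : nat) (hn : (2 <= n)%N)
    (p p' : 'I_n -> R) :
  in_simplex p -> in_simplex p' ->
  exists (q : 'I_n -> R) (j : 'I_n.-1 -> 'I_n),
    [/\ in_simplex q, injective j,
        (forall k, p' k = q (@Ordinal n 0 (ltnW hn)) * p k
                          + \sum_(i < n.-1) q (succ_ord i) * @e_basis R n (j i) k)
      & ((forall k, 0 < p' k) -> 0 < q (@Ordinal n 0 (ltnW hn)))].
Proof.
case: n hn p p' => [|[|n]] // hn p p' p_simplex p'_simplex.
have -> : Ordinal (ltnW hn) = ord0 by exact: val_inj.
have [m [t [t_ge0 tpm le_tp t_pos]]] := simplex_max_scale p_simplex p'_simplex.2.
pose r k := p' k - t * p k.
pose q k := if unlift ord0 k is Some i then r (lift m i) else t.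
have q0 : q ord0 = t by rewrite /q unlift_none.
have qS i : q (succ_ord i) = r (lift m i) by rewrite succ_ordE /q liftK.
exists q, (lift m); split; [|exact: lift_inj| |by rewrite q0].
- split=> [|k]; last by rewrite /q; case: unliftP => // i _; rewrite subr_ge0.
  rewrite big_ord_recl q0.
  under eq_bigr => i _ do rewrite -succ_ordE qS.
  have sum_r : \sum_k r k = 1 - t.
    by rewrite sumrB -mulr_sumr p_simplex.1 p'_simplex.1 mulr1.
  by rewrite (bigD1_ord m) //= /r tpm subrr add0r in sum_r; rewrite sum_r addrC subrK.
- move=> k; under eq_bigr => i _ do rewrite qS.
  by rewrite q0 -sum_e_basis_lift /r ?tpm ?subrr // addrC subrK.
Qed.
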